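(* Let $C$ be a convex subset of the Euclidean plane $\mathbb{R}^2$ (not necessarily closed or bounded). Then for every finite point set $P \subset \mathbb{R}^2$, the straight-line drawing of $G_{t}(P,C)$ is a plane graph.
   Context: For a finite set $P \subset \mathbb{R}^2$ and a set $C \subseteq \mathbb{R}^2$, $G_{t}(P,C)$ is the graph with vertex set $P$ in which two distinct points $u,v \in P$ are adjacent if and only if there is a translate $C+\mathbf{v} = \{x+\mathbf{v} : x \in C\}$ (for some $\mathbf{v}\in\mathbb{R}^2$) with $P \cap (C+\mathbf{v}) = \{u,v\}$. The graph is drawn with each vertex at its point and each edge as the closed straight-line segment between its endpoints. A drawing is a plane graph if (1) no vertex lies on an edge of which it is not an endpoint, and (2) no two edges cross, i.e., two edges may intersect only at a common endpoint. *)

From mathcomp Require Import all_boot all_order all_algebra.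
From mathcomp Require Import reals.
Set Implicit Arguments. Unset Strict Implicit. Unset Printing Implicit Defensive.
Import Order.TTheory GRing.Theory Num.Theory.
Local Open Scope ring_scope.

Section Plane.
Variable R : realType.

Definition pt := (R * R)%type.

Definition comb (x y : pt) (t : R) : pt :=
  ((1 - t) * x.1 + t * y.1, (1 - t) * x.2 + t * y.2).

Definition convex (C : pt -> Prop) : Prop :=
  forall x y t, C x -> C y -> 0 <= t <= 1 -> C (comb x y t).

Definition translate (C : pt -> Prop) (v : pt) : pt -> Prop :=
  fun x => exists c, C c /\ x = (c.1 + v.1, c.2 + v.2).

Definition Gt_adj (P : seq pt) (C : pt -> Prop) (u v : pt) : Prop :=
  u \in P /\ v \in P /\ u <> v /\
  exists w : pt, forall p, p \in P -> (translate C w p <-> (p = u \/ p = v)).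

Definition on_seg (u v z : pt) : Prop :=
  exists t : R, 0 <= t <= 1 /\ z = comb u v t.

Definition plane_drawing (P : seq pt) (adj : pt -> pt -> Prop) : Prop :=
  (forall u v w, adj u v -> w \in P -> w <> u -> w <> v -> ~ on_seg u v w) /\
  (forall u v x y z, adj u v -> adj x y ->
     ~ ((u = x /\ v = y) \/ (u = y /\ v = x)) ->
     on_seg u v z -> on_seg x y z ->
     (z = u \/ z = v) /\ (z = x \/ z = y)).
End Plane.

From HB Require Import structures.
From mathcomp Require Import all_boot all_order all_algebra.
From mathcomp Require Import reals ring lra.
Set Implicit Arguments. Unset Strict Implicit. Unset Printing Implicit Defensive.
Import Order.TTheory GRing.Theory Num.Theory.
Local Open Scope ring_scope.

(* Every translate of a convex set is convex, so an edge uv of G_t(P, C) lies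
   in a convex translate C + a meeting P exactly in {u, v}; no other vertex can
   therefore lie on uv.  If two edges uv and xy, with {u, v} in C + a and
   {x, y} in C + b, cross transversally at z, write a - b as a combination of
   v - u and y - x: convexity of C + a then forces C + a to contain x or y, or
   C + b to contain u or v, so the edges share an endpoint, and transversality
   makes that endpoint z.  Parallel crossing edges lie on one line, where the
   claim is about two intervals neither of which has an endpoint inside the
   other. *)

HB.instance Definition _ (R : realType) :=
  GRing.Lmodule.copy (pt R) (R^o * R^o)%type.

Section Plane.
Variable R : realType.
Implicit Types (K : pt R -> Prop) (u v w x y z p q d : pt R).

Lemma pt_eq x y : x.1 = y.1 -> x.2 = y.2 -> x = y.
Proof. by case: x y => ? ? [? ?] /= -> ->. Qed.

Lemma scale_regular (a x : R^o) : a *: x = a * x. Proof. by []. Qed.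

Ltac coord := apply: pt_eq => /=; rewrite ?scale_regular.

Lemma combE u v t : comb u v t = (1 - t) *: u + t *: v.
Proof. by case: u v => ? ? [? ?]. Qed.

Lemma translateE C w x : translate C w x <-> C (x - w).
Proof.
split=> [[c [Cc ->]]|Cxw]; last by exists (x - w); split=> //; coord; ring.
by rewrite (_ : _ - w = c) //; coord; ring.
Qed.

Lemma translate_shift C w w' x :
  translate C w x <-> translate C w' (x + (w' - w)).
Proof.
have e : x + (w' - w) - w' = x - w by coord; ring.
by split=> /translateE h; apply/translateE; [rewrite e | rewrite -e].
Qed.

Lemma convex_translate C w : convex C -> convex (translate C w).
Proof.
move=> cC x y t /translateE Cx /translateE Cy ht; apply/translateE.
by rewrite (_ : _ - w = comb (x - w) (y - w) t); [apply: cC | coord; ring].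
Qed.

Lemma convex_on_seg K u v w : convex K -> K u -> K v -> on_seg u v w -> K w.
Proof. by move=> cK Ku Kv [t [ht ->]]; apply: cK. Qed.

Lemma convex3 K u v w a b c : convex K -> K u -> K v -> K w ->
  0 <= a -> 0 <= b -> 0 <= c -> 0 < a + b + c ->
  K ((a + b + c)^-1 *: (a *: u + b *: v + c *: w)).
Proof.
move=> cK Ku Kv Kw a0 b0 c0 abc.
have [ab0|ab0] := eqVneq (a + b) 0.
  have [-> ->] : a = 0 /\ b = 0 by lra.
  by rewrite !scale0r !add0r scalerA mulVf ?scale1r //; apply/eqP; lra.
have uv_in : 0 <= b / (a + b) <= 1.
  by rewrite divr_ge0 ?ler_pdivrMr ?mul1r /=; lra.
have w_in : 0 <= c / (a + b + c) <= 1.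
  by rewrite divr_ge0 ?ler_pdivrMr ?mul1r /=; lra.
rewrite (_ : _ *: _ = comb (comb u v (b / (a + b))) w (c / (a + b + c))).
  by apply: (cK) => //; apply: (cK).
by rewrite !combE; coord; field; apply/andP; split; apply/eqP; lra.
Qed.

Lemma convex_cross_core K z p q a b s t :
  convex K -> 0 <= a -> 0 <= b -> 0 <= s <= 1 -> 0 <= t <= 1 ->
  K (z - s *: p) -> K (z + (1 - s) *: p) ->
  K (z + (a *: p + b *: q) - t *: q) -> K (z + (a *: p + b *: q) + (1 - t) *: q) ->
  K (z + (1 - t) *: q) \/ K (z + (a *: p + b *: q) - s *: p).
Proof.
move=> cK a0 b0 hs ht KP1 KP2 KQ1 KQ2.
(* If a (1 - t) <= s b, then z + (1 - t) q lies in the triangle spanned by the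
   two p-endpoints and the last q-endpoint; otherwise z + d - s p lies in the
   triangle spanned by the first p-endpoint and the two q-endpoints.  The
   weights l1, l2, l3 below are the barycentric coordinates. *)
have [le|le] := lerP (a * (1 - t)) (s * b); [left|right].
- have [D0|D0] := eqVneq (b + 1 - t) 0.
    have -> : t = 1 by lra.
    rewrite (_ : _ + _ = comb (z - s *: p) (z + (1 - s) *: p) s); first exact: cK.
    by rewrite combE; coord; ring.
  rewrite (_ : _ + _ = let l1 := b * (1 - s) + (1 - t) * a in
                      let l2 := s * b - (1 - t) * a in
                      let l3 := 1 - t in
     (l1 + l2 + l3)^-1 *: (l1 *: (z - s *: p) + l2 *: (z + (1 - s) *: p)
                           + l3 *: (z + (a *: p + b *: q) + (1 - t) *: q))).
    by apply: convex3; rewrite // ?mulr_ge0 //; nra.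
  by coord; field; apply/eqP; lra.
- have D0 : s + a != 0 by apply/eqP; nra.
  rewrite (_ : _ - _ = let l1 := s in
                      let l2 := a * (1 - t) - s * b in
                      let l3 := a * t + s * b in
     (l1 + l2 + l3)^-1 *: (l1 *: (z - s *: p)
                           + l2 *: (z + (a *: p + b *: q) - t *: q)
                           + l3 *: (z + (a *: p + b *: q) + (1 - t) *: q))).
    by apply: convex3; rewrite // ?mulr_ge0 //; nra.
  by coord; field; apply/eqP; lra.
Qed.

Lemma convex_cross K u v x y d a b s t :
  convex K -> 0 <= s <= 1 -> 0 <= t <= 1 -> comb u v s = comb x y t ->
  d = a *: (v - u) + b *: (y - x) ->
  K u -> K v -> K (x + d) -> K (y + d) ->
  K x \/ K y \/ K (u + d) \/ K (v + d).
Proof.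
move=> cK; wlog a0 : u v a s / 0 <= a => [hwlog hs ht e hd Ku Kv Kx Ky|].
  have [a0|a0] := lerP 0 a; first exact: hwlog a0 hs ht e hd Ku Kv Kx Ky.
  have hs' : 0 <= 1 - s <= 1 by lra.
  have e' : comb v u (1 - s) = comb x y t by rewrite -e !combE; coord; ring.
  have hd' : d = - a *: (u - v) + b *: (y - x) by rewrite hd; coord; ring.
  have := hwlog v u (- a) (1 - s) _ hs' ht e' hd' Kv Ku Kx Ky; rewrite oppr_ge0.
  by move/(_ (ltW a0)); tauto.
wlog b0 : x y b t / 0 <= b => [hwlog hs ht e hd Ku Kv Kx Ky|].
  have [b0|b0] := lerP 0 b; first exact: hwlog b0 hs ht e hd Ku Kv Kx Ky.
  have ht' : 0 <= 1 - t <= 1 by lra.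
  have e' : comb u v s = comb y x (1 - t) by rewrite e !combE; coord; ring.
  have hd' : d = a *: (v - u) + - b *: (x - y) by rewrite hd; coord; ring.
  have := hwlog y x (- b) (1 - t) _ hs ht' e' hd' Ku Kv Ky Kx; rewrite oppr_ge0.
  by move/(_ (ltW b0)); tauto.
move=> hs ht e hd Ku Kv Kx Ky.
have /= e1 := congr1 fst e; have /= e2 := congr1 snd e.
have := convex_cross_core (z := comb u v s) (p := v - u) (q := y - x)
  cK a0 b0 hs ht.
rewrite -hd (_ : comb u v s - s *: (v - u) = u); last by coord; lra.
rewrite (_ : comb u v s + (1 - s) *: (v - u) = v); last by coord; lra.
rewrite (_ : comb u v s + d - t *: (y - x) = x + d); last by coord; lra.
rewrite (_ : comb u v s + d + (1 - t) *: (y - x) = y + d); last by coord; lra.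
rewrite (_ : comb u v s + (1 - t) *: (y - x) = y); last by coord; lra.
rewrite (_ : comb u v s + d - s *: (v - u) = u + d); last by coord; lra.
by move/(_ Ku Kv Kx Ky); tauto.
Qed.

Definition det2 p q := p.1 * q.2 - p.2 * q.1.

Lemma det2_indep p q a b : det2 p q != 0 -> a *: p + b *: q = 0 -> a = 0.
Proof.
move=> hpq e.
have /= e1 := congr1 fst e; have /= e2 := congr1 snd e.
rewrite !scale_regular in e1 e2.
have /eqP : a * det2 p q = 0.
  rewrite (_ : _ * _ = (a * p.1 + b * q.1) * q.2 - (a * p.2 + b * q.2) * q.1).
    by rewrite e1 e2 !mul0r subr0.
  by rewrite /det2; ring.
by rewrite mulf_eq0 (negbTE hpq) orbF => /eqP.
Qed.

Lemma det2_span p q d : det2 p q != 0 -> exists a b, d = a *: p + b *: q.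
Proof.
move=> hpq; exists (det2 d q / det2 p q), (det2 p d / det2 p q).
by rewrite /det2 in hpq *; coord; field.
Qed.

Lemma det2_eq0_colinear p q : q != 0 -> det2 p q = 0 -> exists k, p = k *: q.
Proof.
rewrite /det2 => q0 hpq.
have [q1|q1] := eqVneq q.1 0.
  have q2 : q.2 != 0 by apply: contraNneq q0 => q2; apply/eqP; apply: pt_eq.
  exists (p.2 / q.2); coord; last by rewrite divfK.
  by apply: (mulIf q2); rewrite mulrAC divfK //; lra.
exists (p.1 / q.1); coord; first by rewrite divfK.
by apply: (mulIf q1); rewrite mulrAC divfK //; lra.
Qed.

Lemma crossing_at_shared_endpoint u v x y z s t :
  det2 (v - u) (y - x) != 0 -> z = comb u v s -> z = comb x y t ->
  (u = x \/ u = y) \/ (v = x \/ v = y) -> (z = u \/ z = v) /\ (z = x \/ z = y).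
Proof.
move=> hdet zu zx.
have key : (u - x) + s *: (v - u) + (- t) *: (y - x) = 0.
  rewrite (_ : _ + _ = comb u v s - comb x y t); first by rewrite -zu -zx subrr.
  by rewrite !combE; coord; ring.
have z0 : s = 0 -> z = u by move=> s0; rewrite zu s0 combE; coord; ring.
have z1 : s - 1 = 0 -> z = v.
  by move/eqP; rewrite subr_eq0 => /eqP s1; rewrite zu s1 combE; coord; ring.
case=> [[e|e]|[e|e]]; [subst u | subst u | subst v | subst v].
- have /(det2_indep hdet)/z0 -> : s *: (v - x) + (- t) *: (y - x) = 0.
    by rewrite -key subrr add0r.
  by split; left.
- have /(det2_indep hdet)/z0 -> : s *: (v - y) + (1 - t) *: (y - x) = 0.
    by rewrite -key; coord; ring.
  by split; [left | right].
- have /(det2_indep hdet)/z1 -> : (s - 1) *: (x - u) + (- t) *: (y - x) = 0.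
    by rewrite -key; coord; ring.
  by split; [right | left].
- have /(det2_indep hdet)/z1 -> : (s - 1) *: (y - u) + (1 - t) *: (y - x) = 0.
    by rewrite -key; coord; ring.
  by split; right.
Qed.

Definition between (m l n : R) := m <= l <= n \/ n <= l <= m.

Lemma between_on_seg x q m n l :
  between m l n -> on_seg (x + m *: q) (x + n *: q) (x + l *: q).
Proof.
move=> hl; suff [r hr ->] : exists2 r, 0 <= r <= 1 & l = (1 - r) * m + r * n.
  by exists r; split=> //; rewrite combE; coord; ring.
have [mn|mn] := eqVneq m n.
  by exists 0; [rewrite lexx ler01 | rewrite /between -mn in hl; lra].
have mn' : n - m != 0 by rewrite subr_eq0 eq_sym.
exists ((l - m) / (n - m)); last by field.
have hr : (l - m) / (n - m) * (n - m) = l - m by rewrite divfK.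
by case: hl => /andP[? ?]; apply/andP; split; nra.
Qed.

Lemma line_inj x q l l' : q != 0 -> x + l *: q = x + l' *: q -> l = l'.
Proof.
move=> q0 /addrI /eqP; rewrite -subr_eq0 -scalerBl scaler_eq0 (negbTE q0) orbF.
by rewrite subr_eq0 => /eqP.
Qed.

Lemma touching_intervals m n t :
  between 0 t 1 -> between m t n ->
  (between m 0 n -> 0 = m \/ 0 = n) -> (between m 1 n -> 1 = m \/ 1 = n) ->
  (between 0 m 1 -> m = 0 \/ m = 1) -> (between 0 n 1 -> n = 0 \/ n = 1) ->
  ~ ((m = 0 /\ n = 1) \/ (m = 1 /\ n = 0)) ->
  (t = m \/ t = n) /\ (t = 0 \/ t = 1).
Proof. rewrite /between; lra. Qed.

Section Drawing.
Variables (C : pt R -> Prop) (P : seq (pt R)).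
Hypothesis cC : convex C.
Local Notation adj := (Gt_adj P C).

Lemma Gt_adj_on_seg u v w : adj u v -> w \in P -> on_seg u v w -> w = u \/ w = v.
Proof.
move=> [uP [vP [_ [c Hc]]]] wP hw; apply/(Hc w wP).
apply: (convex_on_seg (convex_translate cC) _ _ hw).
- by apply/(Hc u uP); left.
- by apply/(Hc v vP); right.
Qed.

Lemma Gt_adj_on_line x q m n l : q != 0 ->
  adj (x + m *: q) (x + n *: q) -> x + l *: q \in P -> between m l n ->
  l = m \/ l = n.
Proof.
move=> q0 hmn lP /(between_on_seg x q) /(Gt_adj_on_seg hmn lP).
by case=> /(line_inj q0); [left | right].
Qed.

Lemma Gt_adj_parallel_crossing u v x y z s t :
  adj u v -> adj x y -> ~ ((u = x /\ v = y) \/ (u = y /\ v = x)) ->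
  0 <= s <= 1 -> 0 <= t <= 1 -> z = comb u v s -> z = comb x y t ->
  det2 (v - u) (y - x) = 0 -> (z = u \/ z = v) /\ (z = x \/ z = y).
Proof.
move=> huv hxy hne hs ht zu zx hdet.
have [uP [vP _]] := huv; have [xP [yP [xy _]]] := hxy.
have q0 : y - x != 0 by rewrite subr_eq0; apply/eqP => /esym.
have [k hk] := det2_eq0_colinear q0 hdet.
have [m tm] : exists m, t = m + s * k by exists (t - s * k); ring.
pose pos l := x + l *: (y - x).
have eu : u = pos m.
  rewrite (_ : u = comb u v s - s *: (v - u)); last by rewrite combE; coord; ring.
  by rewrite -zu zx hk tm combE /pos; coord; ring.
have ev : v = pos (m + k) by rewrite -(subrK u v) hk eu /pos; coord; ring.
have ex : x = pos 0 by rewrite /pos; coord; ring.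
have ey : y = pos 1 by rewrite /pos; coord; ring.
have ez : z = pos t by rewrite zx combE /pos; coord; ring.
have huv' : adj (pos m) (pos (m + k)) by rewrite -eu -ev.
have hxy' : adj (pos 0) (pos 1) by rewrite -ex -ey.
have uP' : pos m \in P by rewrite -eu.
have vP' : pos (m + k) \in P by rewrite -ev.
have xP' : pos 0 \in P by rewrite -ex.
have yP' : pos 1 \in P by rewrite -ey.
have hne' : ~ ((m = 0 /\ m + k = 1) \/ (m = 1 /\ m + k = 0)).
  by case=> -[em emk]; apply: hne; [left | right]; rewrite eu ev ex ey emk em.
have ht' : between 0 t 1 by left.
have hb : between m t (m + k).
  by rewrite /between tm; have [k0|k0] := lerP 0 k; [left | right]; nra.
have [hzuv hzxy] := touching_intervals ht' hb
  (Gt_adj_on_line q0 huv' xP') (Gt_adj_on_line q0 huv' yP')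
  (Gt_adj_on_line q0 hxy' uP') (Gt_adj_on_line q0 hxy' vP') hne'.
split.
  by case: hzuv => T; [left; rewrite ez eu T | right; rewrite ez ev T].
by case: hzxy => T; [left; rewrite ez ex T | right; rewrite ez ey T].
Qed.

Lemma Gt_adj_transversal_crossing u v x y z s t :
  adj u v -> adj x y -> 0 <= s <= 1 -> 0 <= t <= 1 ->
  z = comb u v s -> z = comb x y t -> det2 (v - u) (y - x) != 0 ->
  (z = u \/ z = v) /\ (z = x \/ z = y).
Proof.
move=> [uP [vP [_ [wu Hu]]]] [xP [yP [_ [wx Hx]]]] hs ht zu zx hdet.
apply: (crossing_at_shared_endpoint hdet zu zx).
have [a [b hd]] := det2_span (wu - wx) hdet.
have Ku : translate C wu u by apply/(Hu u uP); left.
have Kv : translate C wu v by apply/(Hu v vP); right.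
have Kx : translate C wu (x + (wu - wx)).
  by apply/(translate_shift C wx)/(Hx x xP); left.
have Ky : translate C wu (y + (wu - wx)).
  by apply/(translate_shift C wx)/(Hx y yP); right.
have [Kx'|[Ky'|[Ku'|Kv']]] := convex_cross (convex_translate cC) hs ht
  (etrans (esym zu) zx) hd Ku Kv Kx Ky.
- by case: ((Hu x xP).1 Kx') => ->; [left; left | right; left].
- by case: ((Hu y yP).1 Ky') => ->; [left; right | right; right].
- case: ((Hx u uP).1 ((translate_shift _ _ _ _).2 Ku')) => ->.
    by left; left.
  by left; right.
- case: ((Hx v vP).1 ((translate_shift _ _ _ _).2 Kv')) => ->.
    by right; left.
  by right; right.
Qed.
End Drawing.
End Plane.

Theorem mainTheorem1 (R : realType) (C : pt R -> Prop) (P : seq (pt R)) :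
  convex C -> plane_drawing P (Gt_adj P C).
Proof.
move=> cC; split=> [u v w huv wP wu wv /(Gt_adj_on_seg cC huv wP)|]; first tauto.
move=> u v x y z huv hxy hne [s [hs zu]] [t [ht zx]].
have [hdet|hdet] := eqVneq (det2 (v - u) (y - x)) 0.
- exact: (Gt_adj_parallel_crossing cC huv hxy hne hs ht zu zx hdet).
- exact: (Gt_adj_transversal_crossing cC huv hxy hs ht zu zx hdet).
Qed.
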